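(* Let $\Psi : H^*(SU(3)/T_{SU(3)};\mathbb{C})\to H^*(SU(3)/T_{SU(3)};\mathbb{C})$ be a ring homomorphism. Then there exist $\omega_1,\omega_2\in W$ such that $\omega_1\circ \Psi\circ \omega_2$ is represented by either $\lambda\cdot \left(\begin{smallmatrix} 1 & 0\\ 0 & 1\end{smallmatrix}\right)$ with $\lambda\in\mathbb{C}^*$, or by $\lambda\cdot \left(\begin{smallmatrix} 1 & \varsigma\\ 0 & 0\end{smallmatrix}\right)$ with $\lambda\in\mathbb{C}$, where $\varsigma$ satisfies $\varsigma^2+\varsigma+1=0$.
   Context: $T_{SU(3)}$ denotes the standard maximal torus of $SU(3)$ (unitary diagonal matrices of determinant one), and $SU(3)/T_{SU(3)}$ is the six-dimensional complex flag manifold. Its complex cohomology is identified with $\mathbb{C}[x_1,x_2]/(x_1^2+x_2^2+x_1 x_2,\; x_1^2 x_2+x_1 x_2^2)$, where $x_1,x_2,x_3$ are the standard generators of $H^*(BT_{U(3)};\mathbb{Z})=\mathbb{Z}[x_1,x_2,x_3]$ (so $x_1^3=x_2^3=x_1^2x_2^2=0$ in this ring). Any ring endomorphism of $H^*(SU(3)/T_{SU(3)};\mathbb{C})$ is determined by its restriction to $H^2(SU(3)/T_{SU(3)};\mathbb{C})$, and ''represented by a matrix'' refers to the matrix $\left(\begin{smallmatrix} a_{11} & a_{12}\\ a_{21} & a_{22}\end{smallmatrix}\right)$ of this restriction with respect to the basis $(x_1,x_2)$. $W\cong S_3$ is the Weyl group of $U(3)$ (equivalently $N(T_{SU(3)})/T_{SU(3)}$),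 acting on the cohomology of $SU(3)/T_{SU(3)}$ via permutation of $x_1,x_2,x_3$; the permutations $(1),(12),(13),(23),(123),(321)$ act on $H^2$ by the matrices $\left(\begin{smallmatrix} 1&0\\0&1\end{smallmatrix}\right)$, $\left(\begin{smallmatrix} 0&1\\1&0\end{smallmatrix}\right)$, $\left(\begin{smallmatrix} -1&0\\-1&1\end{smallmatrix}\right)$, $\left(\begin{smallmatrix} 1&-1\\0&-1\end{smallmatrix}\right)$, $\left(\begin{smallmatrix} 0&-1\\1&-1\end{smallmatrix}\right)$, $\left(\begin{smallmatrix} -1&1\\-1&0\end{smallmatrix}\right)$ respectively. $W$ acts on ring endomorphisms by pre- and post-composition. *)

From HB Require Import structures.
From mathcomp Require Import all_boot all_fingroup all_algebra.
From mathcomp Require Import boolp.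
From mathcomp Require Import complex.
From mathcomp Require Import Rstruct.
From mathcomp Require Import mpoly.

Set Implicit Arguments.
Unset Strict Implicit.
Unset Printing Implicit Defensive.

Import GRing.Theory.
Local Open Scope ring_scope.
Local Open Scope quotient_scope.

Notation CC := (complex Rdefinitions.R).

(* Polynomial ring C[x1,x2] = H^*(BT_{SU(3)}; C); x3 = -x1-x2. *)
Notation Pol := {mpoly CC[2]}.
Definition x1 : Pol := 'X_0.
Definition x2 : Pol := 'X_1.
Definition x3 : Pol := - (x1 + x2).

Definition rel1 : Pol := x1 ^+ 2 + x2 ^+ 2 + x1 * x2.
Definition rel2 : Pol := x1 ^+ 2 * x2 + x1 * x2 ^+ 2.

Definition inI (p : Pol) : bool :=
  `[< exists a b : Pol, p = a * rel1 + b * rel2 >].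

Lemma inI_idealr_closed : idealr_closed inI.
Proof.
split.
- by apply/asboolP; exists 0, 0; rewrite !mul0r addr0.
- apply/negP => /asboolP [a [b E]].
  have h1 : rel1.@[fun _ : 'I_2 => (0 : CC)] = 0.
    by rewrite /rel1 /x1 /x2 !expr2 !(mevalD, mevalM, mevalXU) !(mulr0, mul0r, addr0).
  have h2 : rel2.@[fun _ : 'I_2 => (0 : CC)] = 0.
    by rewrite /rel2 /x1 /x2 !expr2 !(mevalD, mevalM, mevalXU) !(mulr0, mul0r, addr0).
  have := congr1 (meval (fun _ : 'I_2 => (0 : CC))) E.
  rewrite meval1 mevalD !mevalM h1 h2 !mulr0 addr0 => /eqP.
  by rewrite oner_eq0.
- move=> c u v /asboolP [a [b Eu]] /asboolP [a' [b' Ev]].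
  apply/asboolP; exists (c * a + a'), (c * b + b'); rewrite Eu Ev.
  rewrite mulrDr !mulrDl !mulrA.
  set A := c * a * rel1; set B := c * b * rel2; set A' := a' * rel1; set B' := b' * rel2.
  by rewrite -!addrA; congr (_ + _); rewrite !addrA [B + _]addrC.
Qed.

HB.instance Definition _ := isIdealr.Build Pol inI inI_idealr_closed.

Definition Iid : idealr Pol := inI.

(* The cohomology ring H^*(SU(3)/T_{SU(3)}; C) = C[x1,x2]/(rel1, rel2). *)
Notation Hcoh := {ideal_quot Iid}.

Definition piH (p : Pol) : Hcoh := \pi_Hcoh p.

Definition inH2 (h : Hcoh) : Prop :=
  exists a b : CC, h = piH (a *: x1 + b *: x2).

Definition graded_endo (Psi : {rmorphism Hcoh -> Hcoh}) : Prop :=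
  (forall c : CC, Psi (piH c%:MP) = piH c%:MP) /\
  (forall h, inH2 h -> inH2 (Psi h)).

Definition represented_by (f : Hcoh -> Hcoh) (M : 'M[CC]_2) : Prop :=
  f (piH x1) = piH (M 0 0 *: x1 + M 1 0 *: x2) /\
  f (piH x2) = piH (M 0 1 *: x1 + M 1 1 *: x2).

(* Weyl group W = S_3 acting by permuting x1, x2, x3:  x_i |-> x_{s(i)}. *)
Definition xs (i : 'I_3) : Pol :=
  if i == 0 :> nat then x1 else if i == 1 :> nat then x2 else x3.

Definition Wsubst (s : 'S_3) : 2.-tuple Pol :=
  [tuple xs (s (inord 0)); xs (s (inord 1))].

Definition Wact (s : 'S_3) (h : Hcoh) : Hcoh :=
  piH (comp_mpoly (Wsubst s) (generic_quotient.repr h)).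

Definition mx_1z00 (z : CC) : 'M[CC]_2 :=
  \matrix_(i < 2, j < 2) (if i == 0 :> nat then (if j == 0 :> nat then 1 else z) else 0).

(* A graded endomorphism Psi acts on H^2 by a 2x2 matrix A.  Let z be a
   primitive cube root of unity and restrict polynomials to the isotropic
   lines t |-> (u t, t), u = z, z^2, of rel1 = x1^2 + x1 x2 + x2^2: there rel1
   becomes 0 and rel2 becomes -t^3, so every element of the ideal restricts to
   t^3 times a polynomial whose constant term does not depend on the line.
   Applied to the images of rel1 and rel2 under Psi, this says that the points
   (z, 1) A and (z^2, 1) A are again isotropic and that the cubic form
   x^2 y + x y^2 takes the same value on them, i.e. their second coordinates
   have equal cubes.  The Weyl group permutes the two isotropic lines: the
   transposition (12) exchanges them and the 3-cycles rescale them by z and z^2.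
   Composing with Weyl elements we can thus make A fix both lines with the same
   eigenvalue, A = lambda I, or send both onto the line of (z, 1) with a fixed
   ratio, A = lambda (1 z^2; 0 0). *)

From HB Require Import structures.
From mathcomp Require Import all_boot all_fingroup all_algebra.
From mathcomp Require Import boolp complex Rstruct mpoly.
From mathcomp Require Import ring.

Set Implicit Arguments.
Unset Strict Implicit.
Unset Printing Implicit Defensive.

Import GRing.Theory Num.Theory.
Local Open Scope ring_scope.

Section BinaryForms.
Variable R : comNzRingType.

Definition qform (x y : R) : R := x ^+ 2 + y ^+ 2 + x * y.
Definition cform (x y : R) : R := x ^+ 2 * y + x * y ^+ 2.

Lemma qformMr x y t : qform (x * t) (y * t) = qform x y * t ^+ 2.
Proof. by rewrite /qform; ring. Qed.

Lemma cformMr x y t : cform (x * t) (y * t) = cform x y * t ^+ 3.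
Proof. by rewrite /cform; ring. Qed.

Lemma qformC x y : qform x y = qform y x.
Proof. by rewrite /qform; ring. Qed.

Lemma cformC x y : cform x y = cform y x.
Proof. by rewrite /cform; ring. Qed.

Lemma qform_cycle x y z : x + y + z = 0 -> qform x y = qform y z.
Proof.
move=> xyz; have -> : z = - (x + y) by apply/eqP; rewrite -addr_eq0 addrC xyz.
by rewrite /qform; ring.
Qed.

Lemma cform_cycle x y z : x + y + z = 0 -> cform x y = cform y z.
Proof.
move=> xyz; have -> : z = - (x + y) by apply/eqP; rewrite -addr_eq0 addrC xyz.
by rewrite /cform; ring.
Qed.

Lemma cform_qform0 x y : qform x y = 0 -> cform x y = - y ^+ 3.
Proof.
move=> q0; have -> : cform x y = y * qform x y - y ^+ 3 by rewrite /qform /cform; ring.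
by rewrite q0 mulr0 sub0r.
Qed.

End BinaryForms.

Lemma rmorph_qform (R S : comNzRingType) (f : {rmorphism R -> S}) x y :
  f (qform x y) = qform (f x) (f y).
Proof. by rewrite /qform !rmorphD rmorphM !rmorphXn. Qed.

Lemma rmorph_cform (R S : comNzRingType) (f : {rmorphism R -> S}) x y :
  f (cform x y) = cform (f x) (f y).
Proof. by rewrite /cform rmorphD !rmorphM. Qed.

(** * The cohomology ring and its restriction to isotropic lines *)

Lemma piHD p q : piH (p + q) = piH p + piH q. Proof. exact: rmorphD. Qed.
Lemma piHB p q : piH (p - q) = piH p - piH q. Proof. exact: rmorphB. Qed.
Lemma piHM p q : piH (p * q) = piH p * piH q. Proof. exact: rmorphM. Qed.

Lemma rel1E : rel1 = qform x1 x2. Proof. by []. Qed.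
Lemma rel2E : rel2 = cform x1 x2. Proof. by []. Qed.

Lemma piH_eq0 p : piH p = 0 <-> exists a b : Pol, p = a * rel1 + b * rel2.
Proof.
have := Quotient.idealrBE Iid p 0; rewrite subr0 => mem.
have piH0 : piH 0 = 0 := rmorph0 _.
have -> : (piH p = 0) <-> is_true (p \in Iid).
  by rewrite mem -piH0; split => /eqP.
by split => /asboolP.
Qed.

Definition on_line (u : CC) : {rmorphism Pol -> {poly CC}} :=
  mmap (@polyC CC) (fun i : 'I_2 => if i == 0 :> nat then u%:P * 'X else 'X).

Lemma on_line_x1 u : on_line u x1 = u%:P * 'X.
Proof. by rewrite /on_line /= /x1 mmapX mmap1U. Qed.

Lemma on_line_x2 u : on_line u x2 = 'X.
Proof. by rewrite /on_line /= /x2 mmapX mmap1U. Qed.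

Lemma on_line_C u c : on_line u c%:MP = c%:P.
Proof. exact: mmapC. Qed.

Lemma on_line_coef0 u v p : (on_line u p)`_0 = (on_line v p)`_0.
Proof.
rewrite -!horner_coef0 /on_line /= /mmap !horner_sum; apply: eq_bigr => m _.
rewrite !hornerM !hornerC /mmap1 !horner_prod; congr (_ * _); apply: eq_bigr => i _.
by rewrite !horner_exp; case: ifP => _; rewrite ?hornerM ?hornerC hornerX ?mulr0.
Qed.

Lemma on_line_rel1 u : u ^+ 2 + u + 1 = 0 -> on_line u rel1 = 0.
Proof.
move=> hu; rewrite rel1E rmorph_qform on_line_x1 on_line_x2.
rewrite -[X in qform _ X]mul1r qformMr -polyC1 -rmorph_qform.
by rewrite /qform expr1n mulr1 addrAC hu rmorph0 mul0r.
Qed.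

Lemma on_line_rel2 u : u ^+ 2 + u + 1 = 0 -> on_line u rel2 = - 'X^3.
Proof.
move=> hu; rewrite rel2E rmorph_cform on_line_x1 on_line_x2.
rewrite -[X in cform _ X]mul1r cformMr -polyC1 -rmorph_cform.
have -> : cform u 1 = -1 by rewrite /cform expr1n !mulr1 -(subr0 (_ + u)) -hu; ring.
by rewrite rmorphN1 mulN1r.
Qed.

(* An element a rel1 + b rel2 of the ideal restricts to -b X^3 on such a line,
   and the constant term of the restriction of b is b(0, 0). *)
Lemma on_line_ideal u v p : u ^+ 2 + u + 1 = 0 -> v ^+ 2 + v + 1 = 0 ->
  piH p = 0 -> (on_line u p)`_2 = 0 /\ (on_line u p)`_3 = (on_line v p)`_3.
Proof.
move=> hu hv /piH_eq0 [a [b ->]].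
have E w : w ^+ 2 + w + 1 = 0 -> on_line w (a * rel1 + b * rel2) = - on_line w b * 'X^3.
  move=> hw; rewrite rmorphD !rmorphM on_line_rel1 // on_line_rel2 //.
  by rewrite mulr0 add0r mulrN mulNr.
by rewrite !E // !coefMXn ltnn subnn !coefN (on_line_coef0 u v).
Qed.

Definition lform (w : 'cV[CC]_2) : Pol := w 0 0 *: x1 + w 1 0 *: x2.

(* Points of C^2 are rows: (pt x y *m A) 0 j is the value at (x, y) of the
   linear form whose coordinates are the column j of A. *)
Definition pt (x y : CC) : 'rV[CC]_2 := \row_(j < 2) if j == 0 :> nat then x else y.

Definition qrow (r : 'rV[CC]_2) : CC := qform (r 0 0) (r 0 1).
Definition crow (r : 'rV[CC]_2) : CC := cform (r 0 0) (r 0 1).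

Lemma mulmx2E m n (A : 'M[CC]_(m, 2)) (B : 'M[CC]_(2, n)) i j :
  (A *m B) i j = A i 0 * B 0 j + A i 1 * B 1 j.
Proof.
rewrite !mxE !big_ord_recl big_ord0 addr0.
by have -> : lift ord0 ord0 = 1 :> 'I_2 by apply: val_inj.
Qed.

Lemma pt_mulmxE n x y (A : 'M[CC]_(2, n)) j :
  (pt x y *m A) 0 j = x * A 0 j + y * A 1 j.
Proof. by rewrite mulmx2E !mxE. Qed.

Lemma lform_delta0 : lform (delta_mx 0 0) = x1.
Proof. by rewrite /lform !mxE /= scale1r scale0r addr0. Qed.

Lemma lform_delta1 : lform (delta_mx 1 0) = x2.
Proof. by rewrite /lform !mxE /= scale1r scale0r add0r. Qed.

Lemma on_line_lform u w : on_line u (lform w) = ((pt u 1 *m w) 0 0)%:P * 'X.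
Proof.
rewrite /lform rmorphD -!mul_mpolyC !rmorphM on_line_x1 on_line_x2 pt_mulmxE.
by rewrite !on_line_C mul1r polyCD polyCM; ring.
Qed.

Definition acts_by (f : Hcoh -> Hcoh) (A : 'M[CC]_2) : Prop :=
  forall w, f (piH (lform w)) = piH (lform (A *m w)).

Lemma acts_by_comp f g A B : acts_by f A -> acts_by g B -> acts_by (f \o g) (A *m B).
Proof. by move=> fA gB w; rewrite /= gB fA mulmxA. Qed.

Lemma acts_by_represented f A : acts_by f A -> represented_by f A.
Proof.
move=> fA; split.
  by rewrite -{1}lform_delta0 fA -colE /lform !mxE.
by rewrite -{1}lform_delta1 fA -colE /lform !mxE.
Qed.

Lemma graded_endo_acts (Psi : {rmorphism Hcoh -> Hcoh}) :
  graded_endo Psi -> exists A, acts_by Psi A.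
Proof.
move=> [PsiC PsiH2].
have [a [c h1]] : inH2 (Psi (piH x1)).
  by apply: PsiH2; exists 1, 0; rewrite scale1r scale0r addr0.
have [b [d h2]] : inH2 (Psi (piH x2)).
  by apply: PsiH2; exists 0, 1; rewrite scale1r scale0r add0r.
set A := \matrix_(i < 2, j < 2)
  if j == 0 :> nat then (if i == 0 :> nat then a else c)
  else (if i == 0 :> nat then b else d).
exists A => w.
have -> : lform (A *m w) =
    (w 0 0)%:MP * (a *: x1 + c *: x2) + (w 1 0)%:MP * (b *: x1 + d *: x2).
  by rewrite /lform !mulmx2E !mxE /= -!mul_mpolyC !rmorphD !rmorphM; ring.
rewrite [RHS]piHD ![in RHS]piHM -h1 -h2 /lform -!mul_mpolyC piHD !piHM rmorphD !rmorphM.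
by rewrite !PsiC.
Qed.

Lemma piH_rel1 : piH rel1 = 0.
Proof. by apply/piH_eq0; exists 1, 0; rewrite mul1r mul0r addr0. Qed.

Lemma piH_rel2 : piH rel2 = 0.
Proof. by apply/piH_eq0; exists 0, 1; rewrite mul1r mul0r add0r. Qed.

Lemma piH_qform p q : piH (qform p q) = qform (piH p) (piH q).
Proof. exact: (rmorph_qform (piH : {rmorphism Pol -> Hcoh})). Qed.

Lemma piH_cform p q : piH (cform p q) = cform (piH p) (piH q).
Proof. exact: (rmorph_cform (piH : {rmorphism Pol -> Hcoh})). Qed.

Lemma coefCXn (c : CC) n : (c%:P * 'X^n)`_n = c.
Proof. by rewrite coefCM coefXn eqxx mulr1. Qed.

Lemma acts_by_isotropic (Psi : {rmorphism Hcoh -> Hcoh}) A u v :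
  u ^+ 2 + u + 1 = 0 -> v ^+ 2 + v + 1 = 0 -> acts_by Psi A ->
  qrow (pt u 1 *m A) = 0 /\ crow (pt u 1 *m A) = crow (pt v 1 *m A).
Proof.
move=> hu hv PsiA.
set l0 := lform (col 0 A); set l1 := lform (col 1 A).
have Psi_x1 : Psi (piH x1) = piH l0 by rewrite -lform_delta0 PsiA -colE.
have Psi_x2 : Psi (piH x2) = piH l1 by rewrite -lform_delta1 PsiA -colE.
have q0 : piH (qform l0 l1) = 0.
  rewrite piH_qform -Psi_x1 -Psi_x2 -rmorph_qform -piH_qform -rel1E.
  by rewrite piH_rel1 rmorph0.
have c0 : piH (cform l0 l1) = 0.
  rewrite piH_cform -Psi_x1 -Psi_x2 -rmorph_cform -piH_cform -rel2E.
  by rewrite piH_rel2 rmorph0.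
have coefs w : (on_line w (qform l0 l1))`_2 = qrow (pt w 1 *m A) /\
                (on_line w (cform l0 l1))`_3 = crow (pt w 1 *m A).
  rewrite rmorph_qform rmorph_cform !on_line_lform qformMr cformMr.
  by rewrite -!rmorph_qform -!rmorph_cform !coefCXn /qrow /crow !pt_mulmxE !mxE.
have [q2 _] := on_line_ideal hu hv q0; have [_ c3] := on_line_ideal hu hv c0.
have [qu cu] := coefs u; have [_ cv] := coefs v.
by split; [rewrite -qu | rewrite -cu -cv].
Qed.

Definition xcoef (k : 'I_3) (i : 'I_2) : CC :=
  if k == 2 :> nat then -1 else (k == i :> nat)%:R.

Definition Wmx (s : 'S_3) : 'M[CC]_2 := \matrix_(i, j) xcoef (s (inord j)) i.

Lemma xs_lform k : xs k = lform (\col_i xcoef k i).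
Proof.
rewrite /lform !mxE /xcoef /xs /x3.
by case: k => [[|[|[|]]]] //= _; rewrite ?scale1r ?scale0r ?addr0 ?add0r ?scaleN1r ?opprD.
Qed.

Lemma lform_mulmx (A : 'M[CC]_2) (w : 'cV[CC]_2) :
  lform (A *m w) = w 0 0 *: lform (col 0 A) + w 1 0 *: lform (col 1 A).
Proof. by rewrite /lform !mulmx2E !mxE -!mul_mpolyC !rmorphD !rmorphM; ring. Qed.

Lemma sum_xs : x1 + x2 + x3 = 0.
Proof. by rewrite /x3 subrr. Qed.

Lemma xs_pairs (P : Pol -> Pol -> Prop) :
  (forall a b, P a b -> P b a) -> P x1 x2 -> P x2 x3 -> P x3 x1 ->
  forall i j, i != j -> P (xs i) (xs j).
Proof.
move=> PC P12 P23 P31; rewrite /xs.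
by case=> [[|[|[|//]]] ?] [[|[|[|//]]] ?] //= _; apply: PC.
Qed.

Lemma qform_xs i j : i != j -> qform (xs i) (xs j) = rel1.
Proof.
have c1 : qform x1 x2 = qform x2 x3 := qform_cycle sum_xs.
have c2 : qform x2 x3 = qform x3 x1 by apply: qform_cycle; rewrite addrC addrA sum_xs.
rewrite rel1E; apply: (xs_pairs (P := fun a b => qform a b = qform x1 x2)).
- by move=> a b <-; exact: qformC.
- exact: erefl.
- exact: esym c1.
- exact: esym (etrans c1 c2).
Qed.

Lemma cform_xs i j : i != j -> cform (xs i) (xs j) = rel2.
Proof.
have c1 : cform x1 x2 = cform x2 x3 := cform_cycle sum_xs.
have c2 : cform x2 x3 = cform x3 x1 by apply: cform_cycle; rewrite addrC addrA sum_xs.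
rewrite rel2E; apply: (xs_pairs (P := fun a b => cform a b = cform x1 x2)).
- by move=> a b <-; exact: cformC.
- exact: erefl.
- exact: esym c1.
- exact: esym (etrans c1 c2).
Qed.

Lemma comp_Wsubst_X s (i : 'I_2) : 'X_i \mPo Wsubst s = xs (s (inord i)).
Proof. by rewrite comp_mpolyXU; case: i => -[|[|//]] i2. Qed.

Lemma comp_Wsubst_rel s : rel1 \mPo Wsubst s = rel1 /\ rel2 \mPo Wsubst s = rel2.
Proof.
have s01 : s (inord 0) != s (inord 1).
  rewrite (inj_eq perm_inj); apply/eqP => /(congr1 val).
  by rewrite [LHS]inordK // [RHS]inordK.
have cq := rmorph_qform (comp_mpoly (Wsubst s) : {rmorphism Pol -> Pol}).
have cc := rmorph_cform (comp_mpoly (Wsubst s) : {rmorphism Pol -> Pol}).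
rewrite {1}rel1E {1}rel2E /= in cq cc *.
by rewrite cq cc /x1 /x2 !comp_Wsubst_X qform_xs // cform_xs.
Qed.

Lemma Wact_piH s p : Wact s (piH p) = piH (p \mPo Wsubst s).
Proof.
have [rel1_s rel2_s] := comp_Wsubst_rel s.
have /piH_eq0 [a [b E]] : piH (generic_quotient.repr (piH p) - p) = 0.
  by rewrite piHB /piH reprK subrr.
apply/eqP; rewrite -subr_eq0 /Wact -piHB; apply/eqP/piH_eq0.
exists (a \mPo Wsubst s), (b \mPo Wsubst s).
by rewrite -comp_mpolyB E comp_mpolyD !rmorphM /= rel1_s rel2_s.
Qed.

Lemma col_Wmx s j : lform (col j (Wmx s)) = xs (s (inord j)).
Proof. by rewrite xs_lform; congr lform; apply/colP => i; rewrite !mxE. Qed.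

Lemma Wact_acts s : acts_by (Wact s) (Wmx s).
Proof.
move=> w; rewrite Wact_piH lform_mulmx !col_Wmx; congr piH.
by rewrite /lform comp_mpolyD !comp_mpolyZ /x1 /x2 !comp_Wsubst_X.
Qed.

Lemma row2P (r s : 'rV[CC]_2) : r 0 0 = s 0 0 -> r 0 1 = s 0 1 -> r = s.
Proof.
move=> e0 e1; apply/rowP => j.
have [->|->] : j = 0 \/ j = 1 by case: j => -[|[|//]] ?; [left|right]; apply: val_inj.
- exact: e0.
- exact: e1.
Qed.

Lemma ptE0 x y : pt x y 0 0 = x. Proof. by rewrite mxE. Qed.
Lemma ptE1 x y : pt x y 0 1 = y. Proof. by rewrite mxE. Qed.

Lemma pt_mulmx x y (A : 'M[CC]_2) :
  pt x y *m A = pt (x * A 0 0 + y * A 1 0) (x * A 0 1 + y * A 1 1).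
Proof. by apply: row2P; rewrite !pt_mulmxE ?ptE0 ?ptE1. Qed.

Lemma scale_pt c x y : c *: pt x y = pt (c * x) (c * y).
Proof. by apply: row2P; rewrite !mxE ?ptE0 ?ptE1. Qed.

Definition xval (k : 'I_3) (x y : CC) : CC :=
  if k == 0 :> nat then x else if k == 1 :> nat then y else - (x + y).

Lemma pt_mulWmx x y s :
  pt x y *m Wmx s = pt (xval (s (inord 0)) x y) (xval (s (inord 1)) x y).
Proof.
apply: row2P; rewrite !pt_mulmxE ?ptE0 ?ptE1 !mxE /xcoef /xval;
  by case: (s _) => -[|[|[|//]]] ? /=; ring.
Qed.

Definition t12 : 'S_3 := tperm (inord 0) (inord 1).
Definition c123 : 'S_3 := (tperm (inord 1) (inord 2) * tperm (inord 0) (inord 1))%g.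
Definition c321 : 'S_3 := (tperm (inord 0) (inord 1) * tperm (inord 1) (inord 2))%g.

Lemma inord_neq i j : (i < 3)%N -> (j < 3)%N -> i != j -> inord i != inord j :> 'I_3.
Proof.
by move=> ilt jlt; apply: contraNneq => /(congr1 val); rewrite /= !inordK // => ->.
Qed.

Lemma xval_inord k x y : (k < 3)%N ->
  xval (inord k) x y = if k == 0 then x else if k == 1 then y else - (x + y).
Proof. by move=> klt; rewrite /xval inordK. Qed.

Lemma Wmx1 : Wmx 1 = 1%:M.
Proof.
apply/matrixP => i j; rewrite !mxE perm1 /xcoef inordK.
  by case: i => -[|[|//]] ?; case: j => -[|[|//]] ?.
exact: ltn_trans (ltn_ord j) _.
Qed.

Lemma pt_mul_t12 x y : pt x y *m Wmx t12 = pt y x.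
Proof. by rewrite pt_mulWmx tpermL tpermR !xval_inord. Qed.

Lemma pt_mul_c123 x y : pt x y *m Wmx c123 = pt y (- (x + y)).
Proof.
rewrite pt_mulWmx !permM (@tpermD _ _ _ (inord 0)) ?inord_neq // !tpermL.
by rewrite (@tpermD _ _ _ (inord 2)) ?inord_neq // !xval_inord.
Qed.

Lemma pt_mul_c321 x y : pt x y *m Wmx c321 = pt (- (x + y)) x.
Proof.
rewrite pt_mulWmx !permM tpermL tpermR (@tpermD _ _ _ (inord 0)) ?inord_neq //.
by rewrite tpermL !xval_inord.
Qed.

Lemma eq_cube_neq0 (F : fieldType) (a b : F) : a ^+ 3 = b ^+ 3 -> a != 0 -> b != 0.
Proof.
move=> ab; apply: contraNneq => b0.
have : a ^+ 3 == 0 by rewrite ab b0 expr0n.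
by rewrite expf_eq0.
Qed.

(** * Normal form under the Weyl group *)

Section WeylNormalForm.
Variable z : CC.
Hypothesis hz : z ^+ 2 + z + 1 = 0.

Local Notation pz := (pt z 1).
Local Notation pz2 := (pt (z ^+ 2) 1).

Lemma z2E : z ^+ 2 = - z - 1.
Proof. by apply/eqP; rewrite -subr_eq0 -hz; apply/eqP; ring. Qed.

Lemma z3E : z ^+ 3 = 1.
Proof. by ring: z2E. Qed.

Lemma z2_root : (z ^+ 2) ^+ 2 + z ^+ 2 + 1 = 0.
Proof. by ring: z2E. Qed.

Lemma z_neq0 : z != 0.
Proof. by apply/eqP => z0; move: z3E; rewrite z0 expr0n => /eqP; rewrite eq_sym oner_eq0. Qed.

Lemma z_neq_z2 : z != z ^+ 2.
Proof.
apply/eqP => zz2; have z1 : z = 1 by rewrite -z3E exprSr -zz2 -expr2.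
have three : (1 ^+ 2 + 1 + 1 : CC) = 3%:R by ring.
by move/eqP: hz; rewrite z1 three pnatr_eq0.
Qed.

Lemma cube_root1 c : c ^+ 3 = 1 -> [\/ c = 1, c = z | c = z ^+ 2].
Proof.
move=> c3; have : (c - 1) * (c - z) * (c - z ^+ 2) = 0 by ring: c3 z2E.
move/eqP; rewrite !mulf_eq0 !subr_eq0 => /orP [/orP [] | ] /eqP.
- by constructor 1.
- by constructor 2.
- by constructor 3.
Qed.

Lemma qrow_eq0 r : qrow r = 0 -> r = r 0 1 *: pz \/ r = r 0 1 *: pz2.
Proof.
rewrite /qrow /qform => q0.
have : (r 0 0 - z * r 0 1) * (r 0 0 - z ^+ 2 * r 0 1) = 0 by rewrite -q0; ring: z2E.
move/eqP; rewrite mulf_eq0 !subr_eq0 => /orP [] /eqP r0; [left | right];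
  by apply: row2P; rewrite scale_pt ?ptE0 ?ptE1 ?r0 ?mulr1 // mulrC.
Qed.

Lemma mx_eq_isotropic (A B : 'M[CC]_2) :
  pz *m A = pz *m B -> pz2 *m A = pz2 *m B -> A = B.
Proof.
move=> e1 e2; apply/matrixP => i j.
have := congr1 (fun r : 'rV[CC]_2 => r 0 j) e1.
have := congr1 (fun r : 'rV[CC]_2 => r 0 j) e2.
rewrite /= !pt_mulmxE !mul1r => f2 f1.
have d0 : (z - z ^+ 2) * (A 0 j - B 0 j) = 0.
  have -> : (z - z ^+ 2) * (A 0 j - B 0 j) =
      (z * A 0 j + A 1 j - (z * B 0 j + B 1 j))
      - (z ^+ 2 * A 0 j + A 1 j - (z ^+ 2 * B 0 j + B 1 j)) by ring.
  by rewrite f1 f2 !subrr.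
move/eqP: d0; rewrite mulf_eq0 subr_eq0 (negbTE z_neq_z2) /= subr_eq0 => /eqP e0.
have [->|->] : i = 0 \/ i = 1 by case: i => -[|[|//]] ?; [left|right]; apply: val_inj.
  exact: e0.
by move: f1; rewrite e0 => /addrI.
Qed.

Lemma Wmx_rotation c : c ^+ 3 = 1 ->
  exists s, pz *m Wmx s = c *: pz /\ pz2 *m Wmx s = c ^+ 2 *: pz2.
Proof.
move=> /cube_root1 [] ->.
- by exists 1%g; rewrite Wmx1 !mulmx1 expr1n !scale1r.
- exists c321; rewrite !pt_mul_c321 !scale_pt; split; congr pt; ring: z2E.
- exists c123; rewrite !pt_mul_c123 !scale_pt; split; congr pt; ring: z2E.
Qed.

Lemma Wmx_t12 : pz *m Wmx t12 = z *: pz2 /\ pz2 *m Wmx t12 = z ^+ 2 *: pz.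
Proof. by rewrite !pt_mul_t12 !scale_pt; split; congr pt; ring: z2E. Qed.

Lemma pz_mx_1z00 : pz *m mx_1z00 (z ^+ 2) = pz /\ pz2 *m mx_1z00 (z ^+ 2) = z *: pz.
Proof. by rewrite !pt_mulmx !mxE /= scale_pt; split; congr pt; ring: z2E. Qed.

Lemma normal_form_two_lines A a b : pz *m A = a *: pz -> pz2 *m A = b *: pz2 ->
  a ^+ 3 = b ^+ 3 -> a != 0 -> exists s l, l != 0 /\ Wmx s *m A = l *: 1%:M.
Proof.
move=> hA1 hA2 ab a0; have b0 := eq_cube_neq0 ab a0.
pose c := a / b; have c0 : c != 0 by rewrite mulf_neq0 ?invr_eq0.
have [s [hs1 hs2]] : exists s, pz *m Wmx s = c *: pz /\ pz2 *m Wmx s = c ^+ 2 *: pz2.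
  by apply: Wmx_rotation; rewrite expr_div_n ab divff // expf_neq0.
exists s, (c * a); split; first exact: mulf_neq0.
apply: mx_eq_isotropic; rewrite scalemx1 mul_mx_scalar !mulmxA.
  by rewrite hs1 -scalemxAl hA1 scalerA.
by rewrite hs2 -scalemxAl hA2 scalerA; congr (_ *: _); rewrite /c; field.
Qed.

Lemma normal_form_one_line A a b : pz *m A = a *: pz -> pz2 *m A = b *: pz ->
  a ^+ 3 = b ^+ 3 -> a != 0 -> exists s l, Wmx s *m A = l *: mx_1z00 (z ^+ 2).
Proof.
move=> hA1 hA2 ab a0; have b0 := eq_cube_neq0 ab a0.
pose c := z * a / b.
have [s [hs1 hs2]] : exists s, pz *m Wmx s = c *: pz /\ pz2 *m Wmx s = c ^+ 2 *: pz2.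
  by apply: Wmx_rotation; rewrite !expr_div_n exprMn z3E mul1r ab divff // expf_neq0.
have [t1 t2] := pz_mx_1z00.
exists s, (c * a); apply: mx_eq_isotropic.
  by rewrite !mulmxA hs1 -!scalemxAl hA1 -!scalemxAr t1 scalerA.
rewrite !mulmxA hs2 -!scalemxAl hA2 -!scalemxAr t2 !scalerA.
by congr (_ *: _); rewrite /c; field.
Qed.

Lemma weyl_normal_form A :
  qrow (pz *m A) = 0 -> qrow (pz2 *m A) = 0 -> crow (pz *m A) = crow (pz2 *m A) ->
  exists s1 s2 : 'S_3,
    (exists l, l != 0 /\ Wmx s1 *m A *m Wmx s2 = l *: 1%:M) \/
    (exists l vs, vs ^+ 2 + vs + 1 = 0 /\ Wmx s1 *m A *m Wmx s2 = l *: mx_1z00 vs).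
Proof.
move=> q1 q2 c12; have [h1 h2] := (qrow_eq0 q1, qrow_eq0 q2).
have ab : ((pz *m A) 0 1) ^+ 3 = ((pz2 *m A) 0 1) ^+ 3.
  by apply: oppr_inj; rewrite -(cform_qform0 q1) -(cform_qform0 q2).
set a := (pz *m A) 0 1 in h1 ab; set b := (pz2 *m A) 0 1 in h2 ab.
have [a0|a0] := eqVneq a 0.
  have b0 : b = 0.
    by move: ab; rewrite a0 expr0n => /esym/eqP; rewrite expf_eq0 => /andP [_ /eqP].
  have A0 : A = 0.
    by apply: mx_eq_isotropic; rewrite !mulmx0; [case: h1 | case: h2] => ->;
      rewrite ?a0 ?b0 scale0r.
  exists 1%g, 1%g; right; exists 0, (z ^+ 2); rewrite A0 mulmx0 mul0mx scale0r.
  by split=> //; exact: z2_root.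
have [t1 t2] := Wmx_t12.
case: h1 => h1; case: h2 => h2.
- have [s [l E]] := normal_form_one_line h1 h2 ab a0.
  exists s, 1%g; right; exists l, (z ^+ 2); rewrite Wmx1 mulmx1.
  by split; [exact: z2_root | exact: E].
- have [s [l [l0 E]]] := normal_form_two_lines h1 h2 ab a0.
  by exists s, 1%g; left; exists l; rewrite Wmx1 mulmx1.
- have [s [l [l0 E]]] : exists s l, l != 0 /\ Wmx s *m (A *m Wmx t12) = l *: 1%:M.
    apply: (normal_form_two_lines (a := a * z ^+ 2) (b := b * z)).
    + by rewrite mulmxA h1 -scalemxAl t2 scalerA.
    + by rewrite mulmxA h2 -scalemxAl t1 scalerA.
    + by ring: ab z3E.
    + by rewrite mulf_neq0 ?expf_neq0 ?z_neq0.
  by exists s, t12; left; exists l; rewrite -mulmxA.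
- have [s [l E]] : exists s l, Wmx s *m (A *m Wmx t12) = l *: mx_1z00 (z ^+ 2).
    apply: (normal_form_one_line (a := a * z ^+ 2) (b := b * z ^+ 2)).
    + by rewrite mulmxA h1 -scalemxAl t2 scalerA.
    + by rewrite mulmxA h2 -scalemxAl t2 scalerA.
    + by rewrite !exprMn ab.
    + by rewrite mulf_neq0 ?expf_neq0 ?z_neq0.
  exists s, t12; right; exists l, (z ^+ 2); rewrite -mulmxA.
  by split; [exact: z2_root | exact: E].
Qed.

End WeylNormalForm.

Lemma exists_cube_root1 : exists z : CC, z ^+ 2 + z + 1 = 0.
Proof.
exists ((-1 + 'i * sqrtC 3) / 2%:R); set z := _ / _.
have h4 : (z ^+ 2 + z + 1) * 4%:R = 3%:R + 'i ^+ 2 * sqrtC 3 ^+ 2 by rewrite /z; field.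
move: h4; rewrite sqrCi sqrtCK mulN1r subrr => /eqP.
by rewrite mulf_eq0 pnatr_eq0 orbF => /eqP.
Qed.

Theorem lemma3p7 (Psi : {rmorphism Hcoh -> Hcoh}) :
  graded_endo Psi ->
  exists w1 w2 : 'S_3,
    (exists lambda : CC, lambda != 0 /\
       represented_by (Wact w1 \o Psi \o Wact w2) (lambda *: 1%:M))
    \/
    (exists lambda vs : CC, vs ^+ 2 + vs + 1 = 0 /\
       represented_by (Wact w1 \o Psi \o Wact w2) (lambda *: mx_1z00 vs)).
Proof.
move=> /graded_endo_acts [A PsiA].
have [z hz] := exists_cube_root1.
have [q1 c12] := acts_by_isotropic hz (z2_root hz) PsiA.
have [q2 _] := acts_by_isotropic (z2_root hz) hz PsiA.
have [s1 [s2 nf]] := weyl_normal_form hz q1 q2 c12.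
have rep T : Wmx s1 *m A *m Wmx s2 = T -> represented_by (Wact s1 \o Psi \o Wact s2) T.
  move=> <-; apply: acts_by_represented.
  exact: acts_by_comp (acts_by_comp (Wact_acts s1) PsiA) (Wact_acts s2).
exists s1, s2; case: nf => [[l [l0 E]] | [l [vs [hvs E]]]].
  by left; exists l; split; [exact: l0 | exact: rep E].
by right; exists l, vs; split; [exact: hvs | exact: rep E].
Qed.
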